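(* Let $D=(V,A)$ be a strongly connected oriented graph. The following two conditions are equivalent: (1) for every vertex $x$, the out-neighbourhood $x^+$ induces a tournament and the in-neighbourhood $x^-$ induces an acyclic digraph; (2) there exists a cyclic order of $V$ such that for every arc $xy\in A$ and every vertex $z\in\,]x,y[$, we have $zy\in A$.
   Context: All digraphs are finite, with no loops and no parallel arcs. A digon is a pair of arcs $xy,yx$; an oriented graph is a digraph with no digon. For a vertex $x$, $x^+=\{y: xy\in A\}$ and $x^-=\{y: yx\in A\}$. A digraph is strongly connected (strong) if there is a directed path between every ordered pair of vertices. A tournament is an oriented graph in which any two distinct vertices are joined by an arc. A linear order $(v_1,\dots,v_n)$ of $V$ is equivalent to each of its cyclic shifts $(v_k,\dots,v_n,v_1,\dots,v_{k-1})$; an equivalence class is a cyclic order. For vertices $v_i,v_j$, the cyclic interval $[v_i,v_j]$ is $\{v_k: i\le k\le j\}$ if $i<j$ and $\{v_k: k\notin\,]j,i[\}$ if $i\ge j$ (this depends only on the cyclic order), and $]v_i,v_j[=[v_i,v_j]\setminus\{v_i,v_j\}$. *)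

From mathcomp Require Import all_boot.
Set Implicit Arguments.
Unset Strict Implicit.
Unset Printing Implicit Defensive.

(* A digraph on a finite vertex type V is given by its arc relation A : rel V
   (no parallel arcs by construction). *)

Definition oriented_graph (V : finType) (A : rel V) : Prop :=
  (forall x, ~~ A x x) /\ (forall x y, A x y -> ~~ A y x).

Definition strongly_connected (V : finType) (A : rel V) : Prop :=
  forall x y, connect A x y.

Definition out_nb (V : finType) (A : rel V) (x : V) : {set V} := [set y | A x y].
Definition in_nb (V : finType) (A : rel V) (x : V) : {set V} := [set y | A y x].

(* The subdigraph induced by S is a tournament (it is already oriented as
   a subgraph of an oriented graph): any two distinct vertices are joined. *)
Definition induces_tournament (V : finType) (A : rel V) (S : {set V}) : Prop :=
  {in S &, forall y z, y != z -> A y z || A z y}.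

Definition induces_acyclic (V : finType) (A : rel V) (S : {set V}) : Prop :=
  forall s : seq V, s != [::] -> all (fun v => v \in S) s -> ~~ cycle A s.

(* A cyclic order is represented by a linear order s (a duplicate-free
   enumeration of all vertices); the open cyclic interval ]x,y[ w.r.t. s,
   with i, j, k the positions of x, y, z:
   if i < j : i < k < j ; if i >= j : k > i or k < j. *)
Definition linear_order_of (V : finType) (s : seq V) : Prop :=
  uniq s /\ forall v : V, v \in s.

Definition in_open_interval (V : finType) (s : seq V) (x y z : V) : bool :=
  let i := index x s in let j := index y s in let k := index z s in
  if i < j then (i < k) && (k < j) else (i < k) || (k < j).

From mathcomp Require Import all_boot zify.

Set Implicit Arguments.
Unset Strict Implicit.
Unset Printing Implicit Defensive.

(* A linear order s represents a cyclic order; [cdist s x y] is the number of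
   forward steps from x to y along it, and z lies in ]x,y[ exactly when
   0 < cdist s x z < cdist s x y.

   (2) -> (1): if every arc xy satisfies zy for all z in ]x,y[, then two
   out-neighbours y, z of x are comparable since one of them lies between x
   and the other; and along an arc yz inside x^- the vertex x cannot lie in
   ]y,z[, so cdist s x strictly increases and x^- has no cycle.

   (1) -> (2): first x^+ is acyclic (a cycle Z in x^+ together with a shortest
   path from Z back to x would produce a cycle in some c^-), so the tournament
   x^+ has a dominant vertex succ x.  Following succ from x one stays in y^-
   until one reaches y, for every arc xy; since y^- is acyclic y is reached,
   hence by strong connectivity succ is a single cyclic permutation.  Its
   orbit is the required cyclic order. *)

(* A finite digraph in which every vertex of P has an out-neighbour in P
   contains a cycle inside P: iterate a choice of such out-neighbours. *)
Lemma exists_cycle_in (V : finType) (e : rel V) (P : pred V) v0 : P v0 ->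
  (forall v, P v -> exists2 w, P w & e v w) ->
  exists c : seq V, [/\ c != [::], all P c & cycle e c].
Proof.
move=> Pv0 out.
pose f v := odflt v [pick w | P w && e v w].
have fP v : P v -> P (f v) && e v (f v).
  move=> Pv; rewrite /f; case: pickP => [w //| none].
  by have [w Pw evw] := out v Pv; move: (none w); rewrite Pw evw.
have iterP j : P (iter j f v0) by elim: j => //= j /fP /andP[].
(* the trajectory of v0 under f eventually enters a cycle, at y *)
have [i lt_i_ord eq_i] := trajectP (looping_order f v0).
set y := iter i f v0.
have orbitP w : w \in orbit f y -> P w.
  by rewrite -fconnect_orbit => /iter_findex <-; rewrite /y -iterD.
have cyc : fcycle f (orbit f y).
  apply/(orbitPcycle 3 0); exists (order f v0 - i).-1.
  by rewrite prednK ?subn_gt0 // /y -iterD subnK ?(ltnW lt_i_ord).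
exists (orbit f y); split.
- by apply/eqP => orb0; have := in_orbit f y; rewrite orb0.
- exact/allP.
- apply: (sub_in_cycle (P := mem (orbit f y))) (allss _) cyc.
  by move=> a b /orbitP /fP /andP[_ eab] _ /eqP <-.
Qed.

Lemma rank_increasing_acyclic (T : eqType) (e : rel T) (r : T -> nat) (c : seq T) :
  {in c &, forall a b, e a b -> r a < r b} -> c != [::] -> ~~ cycle e c.
Proof.
move=> incr; case: c incr => // a l incr _; apply/negP.
move=> /(sub_in_cycle (P := [in a :: l]) incr (allss _)) cyc.
have : cycle ltn (map r (a :: l)) by rewrite cycle_map.
rewrite /= rcons_path => /andP[/(order_path_min ltn_trans)/allP gt_a].
rewrite last_map; case: l {incr cyc} gt_a => [|b l] gt_a /=; first by rewrite ltnn.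
by move/(ltn_trans (gt_a _ (map_f r (mem_last b l)))); rewrite ltnn.
Qed.

Section CyclicDistance.
Variables (V : finType) (s : seq V).

Definition cdist (x y : V) : nat :=
  if index x s <= index y s then index y s - index x s
  else index y s + size s - index x s.

Lemma index_lt x : x \in s -> index x s < size s.
Proof. by rewrite index_mem. Qed.

Lemma index_neq x y : x \in s -> x != y -> index x s != index y s.
Proof.
move=> xs; apply: contra => /eqP same; apply/eqP; apply: (index_inj x xs _ same).
by rewrite -index_mem -same index_mem.
Qed.

Lemma cdist_lt x y : x \in s -> y \in s -> cdist x y < size s.
Proof. by move=> /index_lt xs /index_lt ys; rewrite /cdist; case: ifP; lia. Qed.

Lemma interval_cdist x y z : x \in s -> y \in s -> z \in s -> x != y ->
  in_open_interval s x y z = (0 < cdist x z < cdist x y).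
Proof.
move=> xs ys zs /(index_neq xs) nxy.
move/index_lt: xs => xs; move/index_lt: ys => ys; move/index_lt: zs => zs.
by rewrite /in_open_interval /cdist; do ! case: ifP; lia.
Qed.

Lemma interval_total x y z : x \in s -> y \in s -> z \in s ->
  x != y -> x != z -> y != z ->
  in_open_interval s x y z || in_open_interval s x z y.
Proof.
move=> xs ys zs /(index_neq xs) nxy /(index_neq xs) nxz /(index_neq ys) nyz.
move/index_lt: xs => xs; move/index_lt: ys => ys; move/index_lt: zs => zs.
by rewrite /in_open_interval; do ! case: ifP; lia.
Qed.

Lemma cdist_outside x y z : x \in s -> y \in s -> z \in s ->
  y != x -> z != x -> y != z ->
  in_open_interval s y z x || (cdist x y < cdist x z).
Proof.
move=> xs ys zs /(index_neq ys) nyx /(index_neq zs) nzx /(index_neq ys) nyz.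
move/index_lt: xs => xs; move/index_lt: ys => ys; move/index_lt: zs => zs.
by rewrite /in_open_interval /cdist; do ! case: ifP; lia.
Qed.
End CyclicDistance.

Section CyclicOrderToLocal.
Variables (V : finType) (A : rel V) (s : seq V).
Hypothesis oriented : oriented_graph A.
Hypothesis lin : linear_order_of s.
Hypothesis interval_arc : forall x y z, A x y -> in_open_interval s x y z -> A z y.

Let mem_s v : v \in s. Proof. by case: lin. Qed.

Let arc_neq x y : A x y -> x != y.
Proof. by case: oriented => irr _; apply: contraTneq => ->; apply: irr. Qed.

Lemma out_nb_tournament x : induces_tournament A (out_nb A x).
Proof.
move=> y z; rewrite !inE => Axy Axz nyz.
have /orP[zxy | yxz] :=
  interval_total (mem_s x) (mem_s y) (mem_s z) (arc_neq Axy) (arc_neq Axz) nyz.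
- by rewrite (interval_arc Axy zxy) orbT.
- by rewrite (interval_arc Axz yxz).
Qed.

(* The rank cdist s x increases along arcs of x^-: an arc yz with x in ]y,z[
   would force the arc xz, against the arc zx. *)
Lemma in_nb_acyclic x : induces_acyclic A (in_nb A x).
Proof.
move=> c nc /allP inc; apply: (rank_increasing_acyclic (r := cdist s x)) nc.
move=> y z /inc; rewrite inE => Ayx /inc; rewrite inE => Azx Ayz.
have /orP[xyz | //] := cdist_outside (mem_s x) (mem_s y) (mem_s z)
  (arc_neq Ayx) (arc_neq Azx) (arc_neq Ayz).
by case: oriented => _ /(_ _ _ Azx); rewrite (interval_arc Ayz xyz).
Qed.
End CyclicOrderToLocal.

Section SingleOrbit.
Variables (V : finType) (f : V -> V).
Hypothesis f_conn : forall x y, fconnect f x y.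

Lemma order_card x : order f x = #|V|.
Proof. by apply: eq_card => v; rewrite !inE f_conn. Qed.

Lemma iter_card x : iter #|V| f x = x.
Proof. by rewrite -(order_card x); apply/(orbitPcycle 2 4); rewrite inE f_conn. Qed.

Variable x0 : V.

Lemma orbit_linear_order : linear_order_of (orbit f x0).
Proof. by split=> [|v]; rewrite ?orbit_uniq // -fconnect_orbit. Qed.

Lemma findex_cdist x z : findex f x z = cdist (orbit f x0) x z.
Proof.
have lt_cdist : cdist (orbit f x0) x z < #|V|.
  by rewrite -(order_card x0) -size_orbit cdist_lt // -fconnect_orbit.
suff reach : iter (cdist (orbit f x0) x z) f x = z.
  by rewrite -{1}reach findex_iter // order_card.
have [itx itz] := (iter_findex (f_conn x0 x), iter_findex (f_conn x0 z)).
rewrite /cdist -!/(findex f x0 _) size_orbit order_card.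
set i := findex f x0 x; set k := findex f x0 z.
rewrite -{1}itx -iterD; case: ifP => [le_ik | _]; first by rewrite subnK.
have lt_i : i < #|V| by rewrite -(order_card x0) findex_max.
by rewrite subnK ?iterD ?iter_card // (leq_trans (ltnW lt_i)) ?leq_addl.
Qed.

Lemma orbit_interval x y z : x != y ->
  in_open_interval (orbit f x0) x y z = (0 < findex f x z < findex f x y).
Proof.
have [_ mem] := orbit_linear_order.
by move=> nxy; rewrite interval_cdist // !findex_cdist.
Qed.
End SingleOrbit.

Section LocalToCyclicOrder.
Variables (V : finType) (A : rel V).
Hypothesis irr : forall x, ~~ A x x.
Hypothesis out_tour : forall x y z, A x y -> A x z -> y != z -> A y z || A z y.
Hypothesis in_acyc : forall y c, c != [::] -> all (A^~ y) c -> ~~ cycle A c.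
Hypothesis strong : forall x y, connect A x y.

(* A vertex u outside a cycle Z, with an in-neighbour on Z, lies on a
   "transitive triangle" c -> u -> c' with c -> c' on Z: otherwise the
   in-neighbours of u on Z would be closed under successor on Z and contain a
   cycle of u^-. *)
Lemma cycle_dominated_arc (Z : seq V) u z :
  cycle A Z -> u \notin Z -> z \in Z -> A z u ->
  exists c c', [/\ c \in Z, c' \in Z, A c c', A c u & A u c'].
Proof.
move=> cycZ uZ zZ Azu.
have [/existsP[c /existsP[c' /and5P[*]]] | none] :=
  boolP [exists c, exists c', [&& c \in Z, c' \in Z, A c c', A c u & A u c']].
  by exists c, c'.
have closed w : (w \in Z) && A w u -> exists2 w', (w' \in Z) && A w' u & A w w'.
  case/andP=> wZ Awu; have Awn := next_cycle cycZ wZ.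
  exists (next Z w) => //; rewrite mem_next wZ /=.
  have nun : u != next Z w by apply: contraNneq uZ => ->; rewrite mem_next.
  case/orP: (out_tour Awu Awn nun) => // Aun.
  move/existsPn: none => /(_ w) /existsPn /(_ (next Z w)).
  by rewrite wZ mem_next wZ Awn Awu Aun.
have [c [nc inc cycc]] :=
  exists_cycle_in (P := fun w => (w \in Z) && A w u) (introT andP (conj zZ Azu)) closed.
have inc_u : all (A^~ u) c by apply: sub_all inc => w /andP[].
by case/negP: (in_acyc nc inc_u).
Qed.

Lemma path_in_in_nb c u q : A u c -> path A u q ->
  {in q, forall w, (w != c) && ~~ A c w} -> all (A^~ c) q.
Proof.
elim: q u => //= w q IH u Auc /andP[Auw pq] avoid.
have /andP[nwc nAcw] := avoid w (mem_head w q).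
have Awc : A w c by case/orP: (out_tour Auw Auc nwc) => //; rewrite (negbTE nAcw).
by rewrite Awc (IH w) // => v vq; apply: avoid; rewrite inE vq orbT.
Qed.

(* Take a cycle Z in x^+ and a shortest path
   w -> u -> q from Z to x; with the triangle c -> u -> c' given by
   cycle_dominated_arc, minimality keeps q away from c' and c'^+, so
   c -> u -> q -> x -> c is a cycle in c'^-. *)
Lemma out_nb_acyclic x Z : Z != [::] -> all (A x) Z -> ~~ cycle A Z.
Proof.
move=> nZ /allP xZ; apply/negP => cycZ.
have [z zZ] : exists z, z \in Z by case: Z nZ {xZ cycZ} => // a l; exists a; rewrite mem_head.
have [p pth lst] := connectP (strong z x).
suff no_path m w r : size r = m -> w \in Z -> path A w r -> x = last w r -> False.
  exact: no_path _ z p erefl zZ pth lst.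
elim/ltn_ind: m w r => m shorter w [_ wZ _ /= eq_xw | u q szp wZ].
  by move: (xZ w wZ); rewrite -eq_xw (negbTE (irr x)).
rewrite /= => /andP[Awu pq] lq.
have uZ : u \notin Z.
  by apply/negP => uZ; apply: (shorter (size q) _ u q erefl uZ pq lq); rewrite -szp.
have [c [c' [cZ c'Z Acc' Acu Auc']]] := cycle_dominated_arc cycZ uZ wZ Awu.
have avoid : {in q, forall v, (v != c') && ~~ A c' v}.
  move=> v vq; case/splitPr: vq pq lq szp => q1 q2.
  rewrite cat_path last_cat /= => /and3P[_ _ pq2] lq2 szp.
  have lt_q2 : (size q2).+1 < m by rewrite -szp size_cat ltnS leq_addl.
  apply/andP; split.
  - apply/eqP => eq_vc; apply: (shorter (size q2) _ c' q2 erefl c'Z); rewrite -?eq_vc //.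
    exact: ltnW.
  - apply/negP => Acv.
    by apply: (shorter (size q2).+1 lt_q2 c' (v :: q2) erefl c'Z); rewrite /= ?Acv.
have qc' := path_in_in_nb Auc' pq avoid.
suff : ~~ cycle A (c :: u :: q) by rewrite /= rcons_path Acu pq -lq xZ.
by apply: (in_acyc (y := c')) => //=; rewrite Acc' Auc'.
Qed.

Definition dominant x t : bool := A x t && [forall w, A x w ==> (w != t) ==> A t w].

Lemma dominantP x t :
  reflect (A x t /\ forall w, A x w -> w != t -> A t w) (dominant x t).
Proof.
apply: (iffP andP) => [[Axt /forallP dom] | [Axt dom]]; split=> //.
- by move=> w Axw nwt; move: (dom w); rewrite Axw nwt.
- by apply/forallP => w; apply/implyP => Axw; apply/implyP; apply: dom.
Qed.

(* The tournament x^+ is acyclic, hence has a dominant vertex: otherwise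
   following in-neighbours inside x^+ would close a cycle there. *)
Lemma out_nb_dominant x y : A x y -> exists t, dominant x t.
Proof.
move=> Axy; apply/existsP; apply: contraT => /existsPn none.
have below v : A x v -> exists2 w, A x w & A w v.
  move=> Axv; move: (none v); rewrite /dominant Axv /= => /forallPn[w].
  rewrite !negb_imply; case/and3P=> Axw nwv nAvw; exists w => //.
  have nvw : v != w by rewrite eq_sym.
  by case/orP: (out_tour Axv Axw nvw) => //; rewrite (negbTE nAvw).
have [c [nc inc cycc]] := exists_cycle_in (e := fun a b => A b a) (P := A x) Axy below.
have : ~~ cycle A (rev c).
  by apply: (out_nb_acyclic (x := x)); rewrite ?all_rev // -size_eq0 size_rev size_eq0.
by rewrite rev_cycle cycc.
Qed.

Definition succ x : V := odflt x [pick t | dominant x t].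

Lemma succP x y : A x y -> dominant x (succ x).
Proof.
move=> /out_nb_dominant[t xt]; rewrite /succ.
by case: pickP => [//|none]; rewrite none in xt.
Qed.

Lemma iter_succ_arc x y j : A x y ->
  (forall i, 0 < i <= j -> iter i succ x != y) -> A (iter j succ x) y.
Proof.
move=> Axy; elim: j => [//|j IH] avoid.
have Ajy : A (iter j succ x) y.
  by apply: IH => i /andP[i_gt0 le_ij]; rewrite avoid // i_gt0 (leq_trans le_ij).
have /dominantP[_ dom] := succP Ajy.
by rewrite iterS; apply: dom Ajy _; rewrite eq_sym -iterS avoid ?leqnn.
Qed.

(* y is reached: otherwise the whole succ-orbit of x lies in y^- and contains
   a cycle. *)
Lemma arc_succ_connect x y : A x y -> fconnect succ (succ x) y.
Proof.
move=> Axy; apply: contraT => unreached.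
have to_y v : fconnect succ x v -> A v y.
  move=> /iter_findex <-; apply: iter_succ_arc => // -[//|i] _.
  by apply: contraNneq unreached => <-; rewrite iterSr fconnect_iter.
have step v : fconnect succ x v -> exists2 w, fconnect succ x w & A v w.
  move=> xv; exists (succ v); first exact: connect_trans xv (fconnect1 succ v).
  by case/dominantP: (succP (to_y v xv)).
have [c [nc inc cycc]] := exists_cycle_in (connect0 (frel succ) x) step.
by case/negP: (in_acyc (y := y) nc (sub_all to_y inc)).
Qed.

Lemma succ_connect x v : fconnect succ x v.
Proof.
have [p pth ->] := connectP (strong x v).
elim: p x pth => [|w p IH] x /=; first by rewrite connect0.
case/andP=> Axw /IH; apply: connect_trans.
exact: connect_trans (fconnect1 succ x) (arc_succ_connect Axw).
Qed.

(* The orbit of succ is the required cyclic order: a vertex z of ]x,y[ is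
   reached from x by succ before y, hence lies in y^-. *)
Lemma local_to_cyclic_order : exists s : seq V, linear_order_of s /\
  forall x y z, A x y -> in_open_interval s x y z -> A z y.
Proof.
have [x0 _ | no_vertex] := pickP (@predT V); last first.
  have none (v : V) : False by move: (no_vertex v).
  by exists [::]; split=> [|x]; [split=> // v; case: (none v) | case: (none x)].
exists (orbit succ x0); split; first exact: orbit_linear_order succ_connect x0.
move=> x y z Axy; have nxy : x != y by apply: contraTneq Axy => ->; apply: irr.
rewrite (orbit_interval succ_connect) // => /andP[z_gt0 lt_zy].
rewrite -(iter_findex (succ_connect x z)); apply: iter_succ_arc => // i /andP[i_gt0 le_iz].
have lt_i : i < order succ x by rewrite (leq_ltn_trans le_iz) // findex_max ?succ_connect.
by apply: contraTneq lt_zy => <-; rewrite findex_iter // -leqNgt.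
Qed.
End LocalToCyclicOrder.

Theorem theorem2p1 (V : finType) (A : rel V) :
  oriented_graph A -> strongly_connected A ->
  ((forall x : V, induces_tournament A (out_nb A x) /\
                  induces_acyclic A (in_nb A x)) <->
   (exists s : seq V, linear_order_of s /\
      forall x y z : V, A x y -> in_open_interval s x y z -> A z y)).
Proof.
move=> oriented strong; have [irr _] := oriented.
split=> [local | [s [lin interval_arc]] x].
- apply: local_to_cyclic_order => //.
  + by move=> x y z Axy Axz; apply: (proj1 (local x)); rewrite inE.
  + move=> y c nc inc; apply: (proj2 (local y)) nc _.
    by apply: sub_all inc => v; rewrite inE.
- split; [exact: out_nb_tournament oriented lin interval_arc x
         | exact: in_nb_acyclic oriented lin interval_arc x].
Qed.
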